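(* Let $p>q>0$ be relatively prime integers with Hirzebruch–Jung continued fraction expansion \[ \frac{p}{q} = [a_1,\ldots,a_n] = a_1 - \cfrac{1}{a_2 - \cfrac{1}{\ddots - \cfrac{1}{a_n}}}, \qquad a_i\geq 2. \] Then $\prod_{i=1}^n (a_i-1) \leq p$. Moreover, the inequality still holds if one (but not both) of the factors $a_1-1$ and $a_n-1$ is replaced by $a_1$ or $a_n$ respectively.
   Context: The Hirzebruch–Jung expansion is computed recursively: $p_1/q_1=p/q$, $p_i/q_i = a_i - q_{i+1}/p_{i+1}$ with $p_{i+1}=q_i$ and $0<q_{i+1}<p_{i+1}$, terminating when $q_n=1$. *)

From mathcomp Require Import all_boot all_order all_algebra.
Set Implicit Arguments. Unset Strict Implicit. Unset Printing Implicit Defensive.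
Import Order.TTheory GRing.Theory Num.Theory.
Local Open Scope ring_scope.

Fixpoint hjval (s : seq nat) : rat :=
  match s with
  | [::] => 0
  | [:: a] => a%:R
  | a :: t => a%:R - (hjval t)^-1
  end.

From mathcomp Require Import all_boot all_order all_algebra.
From mathcomp Require Import zify ring.
Import Order.TTheory GRing.Theory Num.Theory.
Set Implicit Arguments. Unset Strict Implicit. Unset Printing Implicit Defensive.

(* Write [a_i, ..., a_n] = N_i / D_i with N_i = a_i N_(i+1) - D_(i+1) and
   D_i = N_(i+1).  Consecutive N's are coprime, so N_1 / D_1 is the reduced
   form of p / q and p = N_1.  An induction from the tail shows
   prod_(j >= i) (a_j - 1) + D_i <= N_i, which gives the main bound; the two
   variants follow from the same recursion, using D_i < N_i. *)

(* The empty expansion gets the fraction 1/0, which makes the recursion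
   uniform and agrees with [hjval [::] = 0 = 1/0] in [rat]. *)
Fixpoint hjfrac (s : seq nat) : nat * nat :=
  if s is a :: t then (a * (hjfrac t).1 - (hjfrac t).2, (hjfrac t).1)%N
  else (1, 0)%N.

Definition hjnum s := (hjfrac s).1.
Definition hjden s := (hjfrac s).2.

Lemma hjnum_cons a t : hjnum (a :: t) = (a * hjnum t - hjden t)%N.
Proof. by []. Qed.

Lemma hjden_cons a t : hjden (a :: t) = hjnum t.
Proof. by []. Qed.

Lemma hjval_cons a t : hjval (a :: t) = (a%:R - (hjval t)^-1)%R.
Proof. by case: t => [|b t] //=; rewrite invr0 subr0. Qed.

Lemma hjden_lt_hjnum s : all (leq 2) s -> (hjden s < hjnum s)%N.
Proof.
elim: s => [//|a t IHt] /andP[a2 /IHt ht].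
by rewrite hjnum_cons hjden_cons; nia.
Qed.

Lemma hjden_gt0 s : s != [::] -> all (leq 2) s -> (0 < hjden s)%N.
Proof.
case: s => [//|a t] _ /andP[_ /hjden_lt_hjnum ht].
by rewrite hjden_cons (leq_ltn_trans _ ht).
Qed.

Lemma coprime_hjfrac s : all (leq 2) s -> coprime (hjnum s) (hjden s).
Proof.
elim: s => [//|a t IHt] /andP[a2 ht].
have DN := hjden_lt_hjnum ht.
move: (IHt ht); rewrite hjnum_cons hjden_cons.
set N := hjnum t in DN *; set D := hjden t in DN *.
have -> : (a * N - D = (a - 1) * N + (N - D))%N by nia.
(* gcd (a N - D) N = gcd (N - D) N = gcd D N *)
have gcdN m : gcdn N m = gcdn (N - D + D) m by rewrite subnK // ltnW.
rewrite /coprime => gcdND; rewrite gcdnC gcdnMDl gcdN gcdnC gcdnDl.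
by rewrite gcdN gcdnC gcdnDr gcdnC in gcdND.
Qed.

Lemma hjval_hjfrac s : all (leq 2) s ->
  hjval s = ((hjnum s)%:R / (hjden s)%:R)%R.
Proof.
elim: s => [_|a t IHt /andP[a2 ht]]; first by rewrite /= invr0 mulr0.
have DN := hjden_lt_hjnum ht.
rewrite hjval_cons IHt // hjnum_cons hjden_cons invf_div natrB; last by nia.
by rewrite natrM; field; rewrite pnatr_eq0 -lt0n (leq_ltn_trans _ DN).
Qed.

Lemma numq_nat_frac (m n : nat) : coprime m n -> (0 < n)%N ->
  numq (m%:R / n%:R)%R = Posz m.
Proof.
move=> cmn n0; have := @coprimeq_num m n; rewrite !absz_nat => /(_ cmn) ->.
by rewrite gtr0_sg ?mul1r // ltz_nat.
Qed.

Lemma prod_sub1_add_hjden_le s : all (leq 2) s ->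
  (\prod_(x <- s) (x - 1) + hjden s <= hjnum s)%N.
Proof.
elim: s => [_|a t IHt /andP[a2 ht]]; first by rewrite big_nil.
move: (IHt ht); rewrite big_cons hjnum_cons hjden_cons.
set P := \prod_(_ <- t) _; set N := hjnum t; set D := hjden t => PDN.
by have := leq_mul (leqnn (a - 1)) PDN; nia.
Qed.

Lemma head_mul_prod_behead_le s : all (leq 2) s ->
  (head 0 s * \prod_(x <- behead s) (x - 1) <= hjnum s)%N.
Proof.
case: s => [//|a t] /andP[a2 /prod_sub1_add_hjden_le]; rewrite hjnum_cons /=.
set P := \prod_(_ <- t) _; set N := hjnum t; set D := hjden t => PDN.
by have := leq_mul (leqnn a) PDN; have := leq_pmull D (ltnW a2); nia.
Qed.

Lemma prod_belast_mul_last_le s : all (leq 2) s ->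
  (\prod_(x <- take (size s).-1 s) (x - 1) * last 0 s <= hjnum s)%N.
Proof.
elim: s => [_|a t IHt /andP[a2 ht]]; first by rewrite /= muln0.
case: t IHt ht => [_ _|b t IHt ht]; first by rewrite big_nil mul1n /hjnum /= muln1 subn0.
have DN := hjden_lt_hjnum (s := b :: t) ht.
move: (IHt ht); rewrite [hjnum (a :: _)]hjnum_cons /= big_cons.
set Q := \prod_(_ <- _) _; set L := last b t.
set N := hjnum _; set D := hjden _ in DN *.
by move=> QLN; have := leq_mul (leqnn (a - 1)) QLN; nia.
Qed.

Theorem mainTheorem7 (p q : nat) (a : seq nat) :
  (0 < q)%N -> (q < p)%N -> coprime p q ->
  a != [::] -> all (fun x => 2 <= x)%N a ->
  hjval a = (p%:R / q%:R)%R ->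
  [/\ (\prod_(x <- a) (x - 1) <= p)%N,
      (head 0%N a * \prod_(x <- behead a) (x - 1) <= p)%N
    & ((\prod_(x <- take (size a).-1 a) (x - 1)) * last 0%N a <= p)%N].
Proof.
move=> q_gt0 _ cop_pq a0 a_ge2 val_a.
have [->] : Posz p = Posz (hjnum a).
  rewrite -(numq_nat_frac cop_pq q_gt0) -val_a hjval_hjfrac //.
  by rewrite numq_nat_frac ?coprime_hjfrac ?hjden_gt0.
split; last exact: prod_belast_mul_last_le.
- exact: leq_trans (leq_addr _ _) (prod_sub1_add_hjden_le a_ge2).
- exact: head_mul_prod_behead_le.
Qed.
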